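(* Assume $|\rho|<1$. Let $$L=I(\hat H_A;\hat H_B)-\min\big[I(\hat H_A;\hat H_E),\,I(\hat H_B;\hat H_E)\big],\qquad U=\min\big[I(\hat H_A;\hat H_B),\,I(\hat H_A;\hat H_B\mid \hat H_E)\big].$$ In the high-SNR regime (i.e. $\sigma_A^2\to0$, $\sigma_B^2\to 0$, $\sigma_E^2\to 0$ with $\sigma_B^2=a\,\sigma_A^2$ and $\sigma_E^2=b\,\sigma_A^2$ for fixed constants $a,b\in(0,\infty)$), both bounds satisfy $$L=\log_2\!\Big(\frac{p(1-|\rho|^2)}{\sigma_A^2+\sigma_B^2}\Big)+O(\sigma_A^2),\qquad U=\log_2\!\Big(\frac{p(1-|\rho|^2)}{\sigma_A^2+\sigma_B^2}\Big)+O(\sigma_A^2).$$ Consequently the secret-key capacity based on complex channel sampling, which satisfies $L\le C_s^{\mathrm{Cplex}}\le U$, equals $\log_2\!\big(\frac{p(1-|\rho|^2)}{\sigma_A^2+\sigma_B^2}\big)+O(\sigma_A^2)$.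
   Context: Fix $p>0$, $\rho\in\mathbb C$ with $|\rho|\le 1$, and noise variances $\sigma_A^2,\sigma_B^2,\sigma_E^2>0$. Let $(H,H_E)$ be a zero-mean circularly-symmetric complex Gaussian (ZMCSCG) random vector with covariance matrix $p\begin{pmatrix}1&\rho\\ \bar\rho&1\end{pmatrix}$. Let $W_A,W_B,W_E$ be ZMCSCG random variables with variances $\sigma_A^2,\sigma_B^2,\sigma_E^2$, mutually independent and independent of $(H,H_E)$. Define $\hat H_A=H+W_A$, $\hat H_B=H+W_B$, $\hat H_E=H_E+W_E$. All mutual informations are in bits (logarithm base 2). The secret-key capacity $C_s^{\mathrm{Cplex}}$ is the maximal rate (secret bits per i.i.d. observation of $(\hat H_A,\hat H_B,\hat H_E)$) at which Alice (observing $\hat H_A$) and Bob (observing $\hat H_B$) can agree on a secret key, with an authenticated public channel, while Eve observes $\hat H_E$; it is known to satisfy $L\le C_s^{\mathrm{Cplex}}\le U$ with $L,U$ as in the claim. Notation $f=O(g)$ means $|f|\le\lambda g$ for some constant $\lambda$ in a neighbourhood of the limit. *)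

From mathcomp Require Import all_boot all_order all_algebra.
From mathcomp.real_closed Require Import complex.
From mathcomp Require Import reals sequences exp trigo.
Import GRing.Theory Num.Theory.

Set Implicit Arguments.
Unset Strict Implicit.
Unset Printing Implicit Defensive.

Local Open Scope ring_scope.
Local Open Scope complex_scope.

Section Defs.
Variable R : realType.

Definition cmod (z : R[i]) : R :=
  Num.sqrt (complex.Re z ^+ 2 + complex.Im z ^+ 2).

Definition log2 (x : R) : R := ln x / ln 2.

(* Covariance matrix of the ZMCSCG vector (H, H_E):  p [[1, rho], [rho^*, 1]] *)
Definition cov_channel (p : R) (rho : R[i]) : 'M[R[i]]_2 :=
  \matrix_(i < 2, j < 2)
    (p%:C * (if i == j then 1 else if i == ord0 then rho else rho^*)).

(* Mixing matrix: (Hhat_A, Hhat_B, Hhat_E) = mix *m (H, H_E) + (W_A, W_B, W_E) *)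
Definition mix : 'M[R[i]]_(3, 2) :=
  \matrix_(i < 3, j < 2) (if (i == 2 :> nat) == (j == 1 :> nat) then 1 else 0).

(* Covariance matrix E[X X^*] of the observation vector
   X = (Hhat_A, Hhat_B, Hhat_E), with independent noises of variances
   sA, sB, sE (i.e. sigma_A^2, sigma_B^2, sigma_E^2).  mix is real, so its
   conjugate transpose is its transpose. *)
Definition cov_obs (p : R) (rho : R[i]) (sA sB sE : R) : 'M[R[i]]_3 :=
  mix *m cov_channel p rho *m mix^T
  + diag_mx (\row_(i < 3) (if i == 0 :> nat then sA%:C
                           else if i == 1 :> nat then sB%:C else sE%:C)).

(* Differential entropy (in bits) of a ZMCSCG vector with covariance K:
   h = log2 det (pi e K)  (the determinant of a Hermitian p.d. matrix is real). *)
Definition gauss_entropy n (K : 'M[R[i]]_n) : R :=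
  log2 (complex.Re (\det ((pi * expR 1)%:C *: K))).

Definition sel (s : seq 'I_3) : 'I_(size s) -> 'I_3 := fun i => nth ord0 s i.

Definition hX (K : 'M[R[i]]_3) (s : seq 'I_3) : R :=
  gauss_entropy (mxsub (@sel s) (@sel s) K).

Definition MI (K : 'M[R[i]]_3) (s t : seq 'I_3) : R :=
  hX K s + hX K t - hX K (s ++ t).

Definition CMI (K : 'M[R[i]]_3) (s t u : seq 'I_3) : R :=
  hX K (s ++ u) + hX K (t ++ u) - hX K u - hX K (s ++ t ++ u).

Definition iA : 'I_3 := ord0.
Definition iB : 'I_3 := inord 1.
Definition iE : 'I_3 := inord 2.

Definition Lbound (p : R) (rho : R[i]) (sA sB sE : R) : R :=
  let K := cov_obs p rho sA sB sE in
  MI K [:: iA] [:: iB] - Num.min (MI K [:: iA] [:: iE]) (MI K [:: iB] [:: iE]).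

Definition Ubound (p : R) (rho : R[i]) (sA sB sE : R) : R :=
  let K := cov_obs p rho sA sB sE in
  Num.min (MI K [:: iA] [:: iB]) (CMI K [:: iA] [:: iB] [:: iE]).

Definition bigO_at0 (f g : R -> R) : Prop :=
  exists lam delta : R, 0 < delta /\
    forall s : R, 0 < s < delta -> `|f s - g s| <= lam * s.

End Defs.

From mathcomp Require Import all_boot all_order all_algebra.
From mathcomp.real_closed Require Import complex.
From mathcomp Require Import reals sequences exp trigo.
From mathcomp Require Import ring lra.
Import Order.TTheory GRing.Theory Num.Theory.
Set Implicit Arguments.
Unset Strict Implicit.
Unset Printing Implicit Defensive.

Local Open Scope ring_scope.
Local Open Scope complex_scope.

(* Every entropy is the log-determinant of a principal submatrix of the
   covariance of (Hhat_A, Hhat_B, Hhat_E), and the pi e factors cancel in the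
   mutual informations.  With s = sigma_A^2, factoring the determinants shows
   that I(A;B) and I(A;B|E) equal the rate log2 (p (1 - |rho|^2) / (s + a s)),
   and I(A;E), I(B;E) equal 0, up to I(H;H_E) = -log2 (1 - |rho|^2) for the
   three unconditional ones and up to a signed sum of increments
   log2 (x + h) - log2 x with h = O(s), each at most h / (x ln 2).  The
   I(H;H_E) terms cancel in L and only enlarge I(A;B) in U, so L, U and
   everything between them are the rate up to O(s). *)

Lemma det_mx2 (F : comPzRingType) (f : nat -> nat -> F) :
  \det (\matrix_(i < 2, j < 2) f i j) = f 0%N 0%N * f 1%N 1%N - f 0%N 1%N * f 1%N 0%N.
Proof.
rewrite (expand_det_row _ ord0) !big_ord_recl big_ord0 /cofactor !det_mx11 !mxE /=.
rewrite !expr0 !expr1; ring.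
Qed.

Lemma det_mx3 (F : comPzRingType) (f : nat -> nat -> F) :
  \det (\matrix_(i < 3, j < 3) f i j) =
  f 0%N 0%N * (f 1%N 1%N * f 2%N 2%N - f 1%N 2%N * f 2%N 1%N)
  - f 0%N 1%N * (f 1%N 0%N * f 2%N 2%N - f 1%N 2%N * f 2%N 0%N)
  + f 0%N 2%N * (f 1%N 0%N * f 2%N 1%N - f 1%N 1%N * f 2%N 0%N).
Proof.
rewrite (expand_det_row _ ord0) !big_ord_recl big_ord0 /cofactor.
rewrite !(expand_det_row _ ord0) !big_ord_recl !big_ord0 /cofactor !det_mx11 !mxE /= /bump /=.
ring.
Qed.

Section ObservationEntropies.
Variables (R : realType) (p sA sB sE : R) (rho : R[i]).
Local Notation K := (cov_obs p rho sA sB sE).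
Local Notation t := (cmod rho ^+ 2).

Definition cov_entry (i j : nat) : R[i] :=
  match i, j with
  | 0, 0 => (p + sA)%:C | 1, 1 => (p + sB)%:C | 2, 2 => (p + sE)%:C
  | 0, 1 | 1, 0 => p%:C
  | 0, 2 | 1, 2 => p%:C * rho
  | _, _ => p%:C * rho^* end.

Lemma cov_obsE (i j : 'I_3) : K i j = cov_entry i j.
Proof.
rewrite /cov_obs !mxE !big_ord_recl !big_ord0 !mxE.
case: i => [[|[|[|?]]] ?]; case: j => [[|[|[|?]]] ?] //=;
  rewrite ?big_ord_recl ?big_ord0 !mxE /=; ring.
Qed.

Definition cov_at (l : seq nat) (i j : nat) : R[i] :=
  cov_entry (nth 0%N l i) (nth 0%N l j).

Lemma hX_cov (s : seq 'I_3) :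
  hX K s = log2 ((pi * expR 1) ^+ size s *
    complex.Re (\det (\matrix_(i < size s, j < size s) cov_at (map val s) i j))).
Proof.
rewrite /hX /gauss_entropy detZ -rmorphXn; congr (log2 _).
set d := \det _; set d' := \det _; have -> : d = d'.
  congr (\det _); apply/matrixP => i j; rewrite [in LHS]mxE [in RHS]mxE cov_obsE /sel /cov_at.
  by rewrite !(nth_map ord0) // ltn_ord.
by case: d' => u v /=; ring.
Qed.

Lemma val_iB : val iB = 1%N. Proof. by rewrite /iB /= inordK. Qed.
Lemma val_iE : val iE = 2%N. Proof. by rewrite /iE /= inordK. Qed.

Local Notation c := (pi * expR 1).

(* Splitting [rho] into real and imaginary parts makes [Re] of each determinant
   a polynomial identity. *)
Local Ltac hX_by_det :=
  rewrite hX_cov /= ?val_iB ?val_iE ?det_mx11 ?det_mx2 ?det_mx3 /cov_at ?mxE /=;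
  congr (log2 (_ * _)); case: rho => u v;
  rewrite /cmod ?sqr_sqrtr ?addr_ge0 ?sqr_ge0 //=; ring.

Lemma hX_A : hX K [:: iA] = log2 (c * (p + sA)).
Proof. hX_by_det. Qed.
Lemma hX_B : hX K [:: iB] = log2 (c * (p + sB)).
Proof. hX_by_det. Qed.
Lemma hX_E : hX K [:: iE] = log2 (c * (p + sE)).
Proof. hX_by_det. Qed.
Lemma hX_AB : hX K [:: iA; iB] = log2 (c ^+ 2 * ((p + sA) * (p + sB) - p * p)).
Proof. hX_by_det. Qed.
Lemma hX_AE : hX K [:: iA; iE] = log2 (c ^+ 2 * ((p + sA) * (p + sE) - p * p * t)).
Proof. hX_by_det. Qed.
Lemma hX_BE : hX K [:: iB; iE] = log2 (c ^+ 2 * ((p + sB) * (p + sE) - p * p * t)).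
Proof. hX_by_det. Qed.
Lemma hX_ABE : hX K [:: iA; iB; iE] =
  log2 (c ^+ 3 * ((p + sE) * ((p + sA) * (p + sB) - p * p) - p * p * t * (sA + sB))).
Proof. hX_by_det. Qed.

End ObservationEntropies.

Section Log2Estimates.
Variable R : realType.
Implicit Types x y z w c h G s l u T v e : R.

Lemma log2M x y : 0 < x -> 0 < y -> log2 (x * y) = log2 x + log2 y.
Proof. by move=> x0 y0; rewrite /log2 lnM ?posrE // mulrDl. Qed.

Lemma log2V x : 0 < x -> log2 x^-1 = - log2 x.
Proof. by move=> x0; rewrite /log2 lnV ?posrE // mulNr. Qed.

Lemma MI_const_cancel c x y z : 0 < c -> 0 < x -> 0 < y -> 0 < z ->
  log2 (c * x) + log2 (c * y) - log2 (c ^+ 2 * z) = log2 x + log2 y - log2 z.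
Proof.
move=> c0 x0 y0 z0; rewrite !log2M ?mulr_gt0 //; lra.
Qed.

Lemma CMI_const_cancel c x y z w : 0 < c -> 0 < x -> 0 < y -> 0 < z -> 0 < w ->
  log2 (c ^+ 2 * x) + log2 (c ^+ 2 * y) - log2 (c * z) - log2 (c ^+ 3 * w)
  = log2 x + log2 y - log2 z - log2 w.
Proof.
move=> c0 x0 y0 z0 w0; rewrite !log2M ?mulr_gt0 //; lra.
Qed.

Definition log2_incr x h := log2 (x + h) - log2 x.

Lemma log2_incr_bound x h G s : 0 < x -> 0 <= h <= G * s ->
  0 <= log2_incr x h <= G / (x * ln 2) * s.
Proof.
move=> x0 /andP[h0 hG].
have l2 : 0 < ln (2 : R) by apply: ln_gt0; lra.
have -> : log2_incr x h = ln (1 + h / x) / ln 2.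
  rewrite /log2_incr /log2 -mulrBl -ln_div ?posrE ?ltr_wpDr //.
  by congr (ln _ / _); field; rewrite gt_eqF.
have hx : 0 <= h / x by rewrite divr_ge0 // ltW.
apply/andP; split; first by rewrite divr_ge0 ?(ltW l2) // ln_ge0 // lerDl.
rewrite ler_pdivrMr //; apply: (le_trans (le_ln1Dx _)); first lra.
rewrite [X in _ <= X](_ : _ = G * s / x); last by field; rewrite !gt_eqF.
by rewrite ler_pM2r ?invr_gt0.
Qed.

Lemma norm_sandwich l c u T e : l <= c <= u ->
  `|l - T| <= e -> `|u - T| <= e -> `|c - T| <= e.
Proof. by move=> /andP[lc cu]; rewrite !ler_norml => /andP[? ?] /andP[? ?]; lra. Qed.

Lemma min_shift_bounds T v x y z w e : 0 <= v ->
  `|x| <= e -> `|y| <= e -> `|z| <= e -> `|w| <= e ->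
  (`|T + v + x - Num.min (v + y) (v + z) - T| <= 2 * e) /\
  (`|Num.min (T + v + x) (T + w) - T| <= 2 * e).
Proof.
move=> v0; rewrite !ler_norml => /andP[? ?] /andP[? ?] /andP[? ?] /andP[? ?].
by case: (ltP (v + y) (v + z)) => ?; case: (ltP (T + v + x) (T + w)) => ?;
  split; apply/andP; split; lra.
Qed.
End Log2Estimates.

Section HighSNR.
Variables (R : realType) (p a b : R) (rho : R[i]).
Hypotheses (p_gt0 : 0 < p) (a_gt0 : 0 < a) (b_gt0 : 0 < b) (rho_lt1 : cmod rho < 1).
Local Notation t := (cmod rho ^+ 2).
Local Notation K s := (cov_obs p rho s (a * s) (b * s)).

Lemma t_ge0 : 0 <= t. Proof. exact: sqr_ge0. Qed.

Lemma t_lt1 : t < 1.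
Proof.
have := sqrtr_ge0 (complex.Re rho ^+ 2 + complex.Im rho ^+ 2).
by have := rho_lt1; rewrite expr2 /cmod; nra.
Qed.

Lemma one_sub_t_gt0 : 0 < 1 - t.
Proof. by rewrite subr_gt0 t_lt1. Qed.

Definition asym_rate (s : R) := log2 (p * (1 - t) / (s + a * s)).

(* The mutual information I(H; H_E) of the noiseless channel gains. *)
Definition eve_info := - log2 (1 - t).

Lemma eve_info_ge0 : 0 <= eve_info.
Proof.
rewrite /eve_info /log2 oppr_ge0 pmulr_lle0 ?invr_gt0 ?ln_gt0 ?ltr1n //.
by rewrite ln_le0 // lerBlDr lerDl t_ge0.
Qed.

Definition err_AB s := log2_incr p s + log2_incr p (a * s) - log2_incr (p * (1 + a)) (a * s).

Definition err_AE s :=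
  log2_incr p s + log2_incr p (b * s) - log2_incr (p * p * (1 - t)) (s * (p * (1 + b) + b * s)).

Definition err_BE s :=
  log2_incr p (a * s) + log2_incr p (b * s) - log2_incr (p * p * (1 - t)) (s * (p * (a + b) + a * b * s)).

Definition err_CMI s :=
  log2_incr (p * p * (1 - t)) (s * (p * (1 + b) + b * s))
  + log2_incr (p * p * (1 - t)) (s * (p * (a + b) + a * b * s))
  - log2_incr p (b * s)
  - log2_incr (p * p * (1 + a) * (1 - t)) (s * (p * a + b * p * (1 + a) + a * b * s)).

Local Ltac positive := solve [ done | exact: ltr01 | (apply: mulr_gt0; positive)
  | (apply: addr_gt0; positive) | (rewrite invr_gt0; positive) | lra ].
(* [lra] ignores section hypotheses, so they are copied into the context. *)
Local Ltac pos :=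
  have := p_gt0; have := a_gt0; have := b_gt0; have := one_sub_t_gt0; intros; positive.
Local Ltac log2_split := repeat first
  [ rewrite log2M; [|pos|pos] | rewrite log2V; [|pos] ].

Lemma gauss_const_gt0 : 0 < pi * expR 1 :> R.
Proof. by rewrite mulr_gt0 ?pi_gt0 ?expR_gt0. Qed.

Lemma MI_AB_expansion s : 0 < s ->
  MI (K s) [:: iA] [:: iB] = asym_rate s + eve_info + err_AB s.
Proof.
move=> s_gt0; rewrite /MI hX_A hX_B hX_AB.
rewrite (_ : _ - p * p = s * (p * (1 + a) + a * s)); last by ring.
rewrite MI_const_cancel ?gauss_const_gt0; try pos.
rewrite /asym_rate /eve_info /err_AB /log2_incr (_ : s + a * s = s * (1 + a)); last by ring.
log2_split; lra.
Qed.

Lemma MI_AE_expansion s : 0 < s -> MI (K s) [:: iA] [:: iE] = eve_info + err_AE s.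
Proof.
move=> s_gt0; rewrite /MI hX_A hX_E hX_AE.
rewrite (_ : _ - _ * t = p * p * (1 - t) + s * (p * (1 + b) + b * s)); last by ring.
rewrite MI_const_cancel ?gauss_const_gt0; try pos.
rewrite /eve_info /err_AE /log2_incr; log2_split; lra.
Qed.

Lemma MI_BE_expansion s : 0 < s -> MI (K s) [:: iB] [:: iE] = eve_info + err_BE s.
Proof.
move=> s_gt0; rewrite /MI hX_B hX_E hX_BE.
rewrite (_ : _ - _ * t = p * p * (1 - t) + s * (p * (a + b) + a * b * s)); last by ring.
rewrite MI_const_cancel ?gauss_const_gt0; try pos.
rewrite /eve_info /err_BE /log2_incr; log2_split; lra.
Qed.

Lemma CMI_expansion s : 0 < s ->
  CMI (K s) [:: iA] [:: iB] [:: iE] = asym_rate s + err_CMI s.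
Proof.
move=> s_gt0; rewrite /CMI /= hX_AE hX_BE hX_E hX_ABE.
rewrite (_ : _ - _ * t = p * p * (1 - t) + s * (p * (1 + b) + b * s)); last by ring.
rewrite (_ : _ - _ * t = p * p * (1 - t) + s * (p * (a + b) + a * b * s)); last by ring.
rewrite (_ : _ - _ * (s + a * s) = s * (p * p * (1 + a) * (1 - t)
                                     + s * (p * a + b * p * (1 + a) + a * b * s))); last by ring.
rewrite CMI_const_cancel ?gauss_const_gt0; try pos.
rewrite /asym_rate /err_CMI /log2_incr (_ : s + a * s = s * (1 + a)); last by ring.
log2_split; lra.
Qed.

Lemma err_linear_bound : exists M, forall s, 0 < s < 1 ->
  [/\ `|err_AB s| <= M * s, `|err_AE s| <= M * s,
      `|err_BE s| <= M * s & `|err_CMI s| <= M * s].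
Proof.
pose q := p * p * (1 - t); pose q' := p * p * (1 + a) * (1 - t).
pose c (G x : R) := G / (x * ln 2).
exists (c 1 p + c a p + c b p + c a (p * (1 + a)) + c (p * (1 + b) + b) q
        + c (p * (a + b) + a * b) q + c (p * a + b * p * (1 + a) + a * b) q').
move=> s /andP[s_gt0 s_lt1].
have q_gt0 : 0 < q by pos.
have q'_gt0 : 0 < q' by pos.
have bss : b * s * s <= b * s by rewrite ler_piMr ?mulr_ge0 ?ltW.
have abss : a * b * s * s <= a * b * s by rewrite ler_piMr ?mulr_ge0 ?ltW.
have incr_le x h G : 0 < x -> 0 <= h -> h <= G * s -> 0 <= log2_incr x h <= c G x * s.
  by move=> x0 h0 hG; apply: log2_incr_bound => //; apply/andP.
have /andP[? ?] : 0 <= log2_incr p s <= c 1 p * s by apply: incr_le; [pos | apply: ltW; pos | lra].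
have /andP[? ?] : 0 <= log2_incr p (a * s) <= c a p * s by apply: incr_le; [pos | apply: ltW; pos | lra].
have /andP[? ?] : 0 <= log2_incr p (b * s) <= c b p * s by apply: incr_le; [pos | apply: ltW; pos | lra].
have /andP[? ?] : 0 <= log2_incr (p * (1 + a)) (a * s) <= c a (p * (1 + a)) * s.
  by apply: incr_le; [pos | apply: ltW; pos | lra].
have /andP[? ?] : 0 <= log2_incr q (s * (p * (1 + b) + b * s)) <= c (p * (1 + b) + b) q * s.
  by apply: incr_le; [pos | apply: ltW; pos | lra].
have /andP[? ?] : 0 <= log2_incr q (s * (p * (a + b) + a * b * s)) <= c (p * (a + b) + a * b) q * s.
  by apply: incr_le; [pos | apply: ltW; pos | lra].
have /andP[? ?] : 0 <= log2_incr q' (s * (p * a + b * p * (1 + a) + a * b * s))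
                   <= c (p * a + b * p * (1 + a) + a * b) q' * s.
  by apply: incr_le; [pos | apply: ltW; pos | lra].
rewrite /err_AB /err_AE /err_BE /err_CMI -/q -/q' !mulrDl !ler_norml.
by split; apply/andP; split; lra.
Qed.

Lemma bounds_near_asym_rate : exists lam, forall s, 0 < s < 1 ->
  `|Lbound p rho s (a * s) (b * s) - asym_rate s| <= lam * s /\
  `|Ubound p rho s (a * s) (b * s) - asym_rate s| <= lam * s.
Proof.
have [M errM] := err_linear_bound; exists (2 * M) => s s01.
have [eAB eAE eBE eCMI] := errM s s01; have s_gt0 : 0 < s by case/andP: s01.
rewrite /Lbound /Ubound /= MI_AB_expansion // MI_AE_expansion // MI_BE_expansion //.
by rewrite CMI_expansion // -mulrA; apply: min_shift_bounds; rewrite ?eve_info_ge0.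
Qed.
End HighSNR.

Theorem proposition1 (R : realType) (p : R) (rho : R[i]) (a b : R) :
  0 < p -> cmod rho < 1 -> 0 < a -> 0 < b ->
  let target := fun s : R => log2 (p * (1 - cmod rho ^+ 2) / (s + a * s)) in
  bigO_at0 (fun s => Lbound p rho s (a * s) (b * s)) target /\
  bigO_at0 (fun s => Ubound p rho s (a * s) (b * s)) target /\
  (forall C : R -> R,
     (forall s : R, 0 < s ->
        Lbound p rho s (a * s) (b * s) <= C s <= Ubound p rho s (a * s) (b * s)) ->
     bigO_at0 C target).
Proof.
move=> p_gt0 rho_lt1 a_gt0 b_gt0 target.
have [lam near_target] := bounds_near_asym_rate p_gt0 a_gt0 b_gt0 rho_lt1.
split; [|split].
- by exists lam, 1; split=> [|s /near_target []]; rewrite ?ltr01.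
- by exists lam, 1; split=> [|s /near_target []]; rewrite ?ltr01.
- move=> C sandwich; exists lam, 1; split=> [|s s01]; first exact: ltr01.
  have [nearL nearU] := near_target s s01.
  by apply: norm_sandwich nearL nearU; apply: sandwich; case/andP: s01.
Qed.
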